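(* Let $m,n\in\mathbb{N}$, let $0<q_{\ell}<1$ for $1\le\ell\le m$, and let $v_{j,\ell}\in\mathbb{C}$ for $1\le j\le n$, $1\le\ell\le m$. Then the $n\times n$ matrix \[ \left(\prod_{\ell=1}^{m}\theta_{3}\left(e^{2\pi i(v_{j,\ell}-\overline{v_{k,\ell}})},\ q_{\ell}\right)\right)_{j,k=1}^{n} \] is positive semidefinite.
   Context: The Jacobi theta function is defined by $\theta_{3}(z,q)=\sum_{n=-\infty}^{\infty}q^{n^{2}}e^{2\pi inv}$ where $z=e^{2\pi iv}$, $v\in\mathbb{C}$, $|q|<1$. A complex matrix $A=(a_{j,k})_{j,k=1}^n$ is positive semidefinite if $\sum_{j,k}a_{j,k}z_j\overline{z_k}\ge0$ for all $z_1,\dots,z_n\in\mathbb{C}$. *)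

From Stdlib Require Import Reals ZArith.
From Coquelicot Require Import Coquelicot.
Open Scope R_scope.

Definition cexp (z : C) : C :=
  (exp (Re z) * cos (Im z), exp (Re z) * sin (Im z)).

Fixpoint csum (n : nat) (f : nat -> C) : C :=
  match n with O => RtoC 0 | S p => Cplus (csum p f) (f p) end.
Fixpoint cprod (n : nat) (f : nat -> C) : C :=
  match n with O => RtoC 1 | S p => Cmult (cprod p f) (f p) end.

Definition theta3_term (v : C) (q : R) (k : Z) : C :=
  Cmult (RtoC (q ^ (Z.abs_nat k * Z.abs_nat k)))
        (cexp (Cmult (Cmult (RtoC (2 * PI * IZR k)) Ci) v)).

(* symmetric partial sum  sum_{k=-N}^{N} *)
Definition theta3_partial (v : C) (q : R) (N : nat) : C :=
  csum (2 * N + 1) (fun i => theta3_term v q (Z.of_nat i - Z.of_nat N)%Z).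

(* theta_3(e^{2 pi i v}, q) = sum_{k in Z} q^{k^2} e^{2 pi i k v},
   as the limit of the symmetric partial sums (real and imaginary parts). *)
Definition theta3 (v : C) (q : R) : C :=
  (real (Lim_seq (fun N => Re (theta3_partial v q N))),
   real (Lim_seq (fun N => Im (theta3_partial v q N)))).

Definition psd (n : nat) (A : nat -> nat -> C) : Prop :=
  forall z : nat -> C,
    let s := csum n (fun j => csum n (fun k =>
               Cmult (Cmult (A j k) (z j)) (Cconj (z k)))) in
    Im s = 0 /\ 0 <= Re s.

(* Each term q^(k^2) e^(2 pi i k (a - conj b)) of the theta series factors as
   q^(k^2) u(a) conj(u(b)) with u(w) = e^(2 pi i k w), so a symmetric partial sum
   of theta_3, as a matrix in (j, k), is a nonnegative combination of rank-one
   Gram matrices. The entrywise product of a positive semidefinite matrix with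
   such a combination is again positive semidefinite, which handles the product
   over l of partial sums. The theta series converges, its terms being dominated
   by q^(k^2) e^(2 pi |k| |Im v|) (ratio test), and positive semidefiniteness
   passes to entrywise limits. *)

From Stdlib Require Import Reals Rpower ZArith Lia Lra.
From Coquelicot Require Import Coquelicot.
Open Scope R_scope.

Lemma C_ext (x y : C) : Re x = Re y -> Im x = Im y -> x = y.
Proof. destruct x, y; simpl; intros -> ->; reflexivity. Qed.

Lemma csum_ext n f g :
  (forall i, (i < n)%nat -> f i = g i) -> csum n f = csum n g.
Proof.
  induction n as [|n IH]; intros Hfg; simpl; [reflexivity|].
  rewrite IH by (intros i Hi; apply Hfg; lia).
  rewrite Hfg by lia; reflexivity.
Qed.

Lemma csum_plus n f g :
  csum n (fun i => Cplus (f i) (g i)) = Cplus (csum n f) (csum n g).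
Proof.
  induction n as [|n IH]; simpl; [apply C_ext; simpl; ring|].
  rewrite IH; ring.
Qed.

Lemma csum_mult_l n c f : Cmult c (csum n f) = csum n (fun i => Cmult c (f i)).
Proof.
  induction n as [|n IH]; simpl; [apply C_ext; simpl; ring|].
  rewrite <- IH; ring.
Qed.

Lemma csum_mult_r n c f : Cmult (csum n f) c = csum n (fun i => Cmult (f i) c).
Proof.
  induction n as [|n IH]; simpl; [apply C_ext; simpl; ring|].
  rewrite <- IH; ring.
Qed.

Lemma csum_conj n f : Cconj (csum n f) = csum n (fun i => Cconj (f i)).
Proof.
  induction n as [|n IH]; simpl; [apply C_ext; simpl; ring|].
  rewrite Cplus_conj, IH; reflexivity.
Qed.

Lemma csum_shift n f : csum (S n) f = Cplus (f 0%nat) (csum n (fun i => f (S i))).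
Proof.
  induction n as [|n IH]; [apply C_ext; simpl; ring|].
  change (csum (S (S n)) f) with (Cplus (csum (S n) f) (f (S n))).
  rewrite IH; simpl; ring.
Qed.

Definition Cnonneg (c : C) : Prop := Im c = 0 /\ 0 <= Re c.

Lemma Cnonneg_plus a b : Cnonneg a -> Cnonneg b -> Cnonneg (Cplus a b).
Proof. destruct a, b; unfold Cnonneg; simpl; lra. Qed.

Lemma Cnonneg_scal (w : R) c : 0 <= w -> Cnonneg c -> Cnonneg (Cmult (RtoC w) c).
Proof.
  destruct c as [a b]; unfold Cnonneg; simpl; intros Hw [-> Ha].
  split; [ring | nra].
Qed.

Lemma Cnonneg_mult_conj c : Cnonneg (Cmult c (Cconj c)).
Proof. destruct c as [a b]; unfold Cnonneg; simpl; split; [ring | nra]. Qed.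

Definition hform (n : nat) (A : nat -> nat -> C) (z : nat -> C) : C :=
  csum n (fun j => csum n (fun k => Cmult (Cmult (A j k) (z j)) (Cconj (z k)))).

Lemma psdE n A : psd n A <-> forall z, Cnonneg (hform n A z).
Proof. reflexivity. Qed.

Lemma hform_ext n A B z :
  (forall j k, A j k = B j k) -> hform n A z = hform n B z.
Proof.
  intros HAB; unfold hform.
  apply csum_ext; intros j _; apply csum_ext; intros k _; rewrite HAB; reflexivity.
Qed.

Lemma hform_plus n A B z :
  hform n (fun j k => Cplus (A j k) (B j k)) z = Cplus (hform n A z) (hform n B z).
Proof.
  unfold hform; rewrite <- csum_plus; apply csum_ext; intros j _.
  rewrite <- csum_plus; apply csum_ext; intros k _; ring.
Qed.

Lemma hform_scal n (w : C) A z :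
  hform n (fun j k => Cmult w (A j k)) z = Cmult w (hform n A z).
Proof.
  unfold hform; rewrite csum_mult_l; apply csum_ext; intros j _.
  rewrite csum_mult_l; apply csum_ext; intros k _; ring.
Qed.

Lemma hform_rank1 n u z :
  hform n (fun j k => Cmult (u j) (Cconj (u k))) z =
  Cmult (csum n (fun j => Cmult (u j) (z j))) (Cconj (csum n (fun j => Cmult (u j) (z j)))).
Proof.
  unfold hform; rewrite csum_conj, csum_mult_r; apply csum_ext; intros j _.
  rewrite csum_mult_l; apply csum_ext; intros k _; rewrite Cmult_conj; ring.
Qed.

Lemma hform_schur_rank1 n A u z :
  hform n (fun j k => Cmult (A j k) (Cmult (u j) (Cconj (u k)))) z =
  hform n A (fun j => Cmult (u j) (z j)).
Proof.
  unfold hform; apply csum_ext; intros j _; apply csum_ext; intros k _.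
  rewrite Cmult_conj; ring.
Qed.

Lemma psd_ext n A B : (forall j k, A j k = B j k) -> psd n A -> psd n B.
Proof. rewrite !psdE; intros HAB HA z; rewrite <- (hform_ext n A B z HAB); apply HA. Qed.

Lemma psd_rank1 n u : psd n (fun j k => Cmult (u j) (Cconj (u k))).
Proof. apply psdE; intros z; rewrite hform_rank1; apply Cnonneg_mult_conj. Qed.

Lemma psd_zero n : psd n (fun _ _ => RtoC 0).
Proof.
  apply (psd_ext n (fun j k => Cmult (RtoC 0) (Cconj (RtoC 0)))); [|apply psd_rank1].
  intros; apply C_ext; simpl; ring.
Qed.

Lemma psd_plus n A B : psd n A -> psd n B -> psd n (fun j k => Cplus (A j k) (B j k)).
Proof. rewrite !psdE; intros HA HB z; rewrite hform_plus; apply Cnonneg_plus; [apply HA | apply HB]. Qed.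

Lemma psd_csum n I B : (forall i, (i < I)%nat -> psd n (B i)) ->
  psd n (fun j k => csum I (fun i => B i j k)).
Proof.
  induction I as [|I IH]; intros HB; simpl; [apply psd_zero|].
  apply psd_plus; [apply IH; intros i Hi; apply HB | apply HB]; lia.
Qed.

Lemma psd_scal n (w : R) A : 0 <= w -> psd n A -> psd n (fun j k => Cmult (RtoC w) (A j k)).
Proof. rewrite !psdE; intros Hw HA z; rewrite hform_scal; apply Cnonneg_scal; [exact Hw | apply HA]. Qed.

Lemma psd_schur_rank1 n A u : psd n A ->
  psd n (fun j k => Cmult (A j k) (Cmult (u j) (Cconj (u k)))).
Proof. rewrite !psdE; intros HA z; rewrite hform_schur_rank1; apply HA. Qed.

Lemma psd_schur_gram n I A (w : nat -> R) (u : nat -> nat -> C) :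
  psd n A -> (forall i, (i < I)%nat -> 0 <= w i) ->
  psd n (fun j k => Cmult (A j k)
           (csum I (fun i => Cmult (RtoC (w i)) (Cmult (u i j) (Cconj (u i k)))))).
Proof.
  intros HA Hw.
  apply (psd_ext n (fun j k => csum I (fun i =>
           Cmult (RtoC (w i)) (Cmult (A j k) (Cmult (u i j) (Cconj (u i k))))))).
  - intros j k; rewrite csum_mult_l; apply csum_ext; intros; ring.
  - apply psd_csum; intros i Hi; apply psd_scal; [apply Hw, Hi | apply psd_schur_rank1, HA].
Qed.

Lemma Ci_scal_mult (c : R) w : Cmult (Cmult (RtoC c) Ci) w = (- (c * Im w), c * Re w).
Proof. destruct w; apply C_ext; simpl; ring. Qed.

Lemma cexp_Ci_minus_conj (c : R) a b :
  cexp (Cmult (Cmult (RtoC c) Ci) (Cminus a (Cconj b))) =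
  Cmult (cexp (Cmult (Cmult (RtoC c) Ci) a)) (Cconj (cexp (Cmult (Cmult (RtoC c) Ci) b))).
Proof.
  rewrite !Ci_scal_mult; destruct a as [a1 a2], b as [b1 b2]; unfold cexp; simpl.
  replace (- (c * (a2 + - - b2))) with (- (c * a2) + - (c * b2)) by ring.
  replace (c * (a1 + - b1)) with (c * a1 - c * b1) by ring.
  rewrite exp_plus, cos_minus, sin_minus; apply C_ext; simpl; ring.
Qed.

Definition cexp_freq (k : Z) (w : C) : C :=
  cexp (Cmult (Cmult (RtoC (2 * PI * IZR k)) Ci) w).

Definition theta3_index (N i : nat) : Z := (Z.of_nat i - Z.of_nat N)%Z.

Lemma theta3_partial_gram a b q N :
  theta3_partial (Cminus a (Cconj b)) q N =
  csum (2 * N + 1) (fun i =>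
    let k := theta3_index N i in
    Cmult (RtoC (q ^ (Z.abs_nat k * Z.abs_nat k)))
          (Cmult (cexp_freq k a) (Cconj (cexp_freq k b)))).
Proof.
  unfold theta3_partial; apply csum_ext; intros i _.
  unfold theta3_term, cexp_freq; rewrite cexp_Ci_minus_conj; reflexivity.
Qed.

Lemma psd_theta3_partial_prod m n q v N :
  (forall l, (l < m)%nat -> 0 <= q l) ->
  psd n (fun j k => cprod m (fun l => theta3_partial (Cminus (v j l) (Cconj (v k l))) (q l) N)).
Proof.
  induction m as [|m IH]; intros Hq.
  - apply (psd_ext n (fun j k => Cmult (RtoC 1) (Cconj (RtoC 1)))); [|apply psd_rank1].
    intros; apply C_ext; simpl; ring.
  - eapply psd_ext; [|apply (psd_schur_gram n (2 * N + 1)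
        (fun j k => cprod m (fun l => theta3_partial (Cminus (v j l) (Cconj (v k l))) (q l) N))
        (fun i => q m ^ (Z.abs_nat (theta3_index N i) * Z.abs_nat (theta3_index N i)))
        (fun i j => cexp_freq (theta3_index N i) (v j m)))].
    + intros j k; change (cprod (S m) ?f) with (Cmult (cprod m f) (f m)).
      cbv beta; rewrite theta3_partial_gram; reflexivity.
    + apply IH; intros l Hl; apply Hq; lia.
    + intros i _; apply pow_le, Hq; lia.
Qed.

Definition is_lim_seqC (u : nat -> C) (z : C) : Prop :=
  is_lim_seq (fun N => Re (u N)) (Re z) /\ is_lim_seq (fun N => Im (u N)) (Im z).

Lemma is_lim_seqC_const c : is_lim_seqC (fun _ => c) c.
Proof. split; apply is_lim_seq_const. Qed.

Lemma is_lim_seqC_plus u w a b : is_lim_seqC u a -> is_lim_seqC w b ->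
  is_lim_seqC (fun N => Cplus (u N) (w N)) (Cplus a b).
Proof. intros [Hu1 Hu2] [Hw1 Hw2]; split; apply is_lim_seq_plus'; assumption. Qed.

Lemma is_lim_seqC_mult u w a b : is_lim_seqC u a -> is_lim_seqC w b ->
  is_lim_seqC (fun N => Cmult (u N) (w N)) (Cmult a b).
Proof.
  intros [Hu1 Hu2] [Hw1 Hw2]; split.
  - apply is_lim_seq_minus'; apply is_lim_seq_mult'; assumption.
  - apply is_lim_seq_plus'; apply is_lim_seq_mult'; assumption.
Qed.

Lemma is_lim_seqC_csum n (f : nat -> nat -> C) g :
  (forall i, (i < n)%nat -> is_lim_seqC (fun N => f N i) (g i)) ->
  is_lim_seqC (fun N => csum n (f N)) (csum n g).
Proof.
  induction n as [|n IH]; intros Hf; simpl; [apply is_lim_seqC_const|].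
  apply is_lim_seqC_plus; [apply IH; intros i Hi; apply Hf | apply Hf]; lia.
Qed.

Lemma is_lim_seqC_cprod n (f : nat -> nat -> C) g :
  (forall i, (i < n)%nat -> is_lim_seqC (fun N => f N i) (g i)) ->
  is_lim_seqC (fun N => cprod n (f N)) (cprod n g).
Proof.
  induction n as [|n IH]; intros Hf; simpl; [apply is_lim_seqC_const|].
  apply is_lim_seqC_mult; [apply IH; intros i Hi; apply Hf | apply Hf]; lia.
Qed.

Lemma Cnonneg_lim u z : (forall N, Cnonneg (u N)) -> is_lim_seqC u z -> Cnonneg z.
Proof.
  intros Hu [HRe HIm]; split.
  - apply is_lim_seq_unique in HIm.
    rewrite (Lim_seq_ext _ (fun _ => 0)), Lim_seq_const in HIm by (intros; apply Hu).
    injection HIm; auto.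
  - exact (is_lim_seq_le (fun _ => 0) _ 0 (Re z) (fun N => proj2 (Hu N))
             (is_lim_seq_const 0) HRe).
Qed.

Lemma psd_lim n (A : nat -> nat -> nat -> C) B :
  (forall N, psd n (A N)) ->
  (forall j k, is_lim_seqC (fun N => A N j k) (B j k)) -> psd n B.
Proof.
  intros HA Hlim; apply psdE; intros z.
  apply (Cnonneg_lim (fun N => hform n (A N) z)); [intros N; apply HA|].
  apply is_lim_seqC_csum; intros j _; apply is_lim_seqC_csum; intros k _.
  repeat apply is_lim_seqC_mult; apply Hlim || apply is_lim_seqC_const.
Qed.

Lemma theta3_partial_S v q N :
  theta3_partial v q (S N) =
  Cplus (theta3_partial v q N)
        (Cplus (theta3_term v q (- Z.of_nat (S N))) (theta3_term v q (Z.of_nat (S N)))).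
Proof.
  unfold theta3_partial; replace (2 * S N + 1)%nat with (S (S (2 * N + 1))) by lia.
  change (csum (S (S ?M)) ?f) with (Cplus (csum (S M) f) (f (S M))).
  rewrite csum_shift; cbv beta.
  rewrite (csum_ext (2 * N + 1) (fun i => theta3_term v q (Z.of_nat (S i) - Z.of_nat (S N)))
             (fun i => theta3_term v q (Z.of_nat i - Z.of_nat N))) by (intros; f_equal; lia).
  replace (Z.of_nat 0 - Z.of_nat (S N))%Z with (- Z.of_nat (S N))%Z by lia.
  replace (Z.of_nat (S (2 * N + 1)) - Z.of_nat (S N))%Z with (Z.of_nat (S N)) by lia.
  ring.
Qed.

Lemma Rabs_Re_cexp z : Rabs (Re (cexp z)) <= exp (Re z).
Proof.
  unfold cexp; simpl; rewrite Rabs_mult, (Rabs_pos_eq (exp _)) by (left; apply exp_pos).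
  rewrite <- (Rmult_1_r (exp (Re z))) at 2.
  apply Rmult_le_compat_l; [left; apply exp_pos | apply Rabs_le, COS_bound].
Qed.

Lemma Rabs_Im_cexp z : Rabs (Im (cexp z)) <= exp (Re z).
Proof.
  unfold cexp; simpl; rewrite Rabs_mult, (Rabs_pos_eq (exp _)) by (left; apply exp_pos).
  rewrite <- (Rmult_1_r (exp (Re z))) at 2.
  apply Rmult_le_compat_l; [left; apply exp_pos | apply Rabs_le, SIN_bound].
Qed.

Lemma exp_le_exp x y : x <= y -> exp x <= exp y.
Proof. intros [Hlt | ->]; [left; apply exp_increasing, Hlt | right; reflexivity]. Qed.

Lemma exp_Re_cexp_freq_arg k v :
  exp (Re (Cmult (Cmult (RtoC (2 * PI * IZR k)) Ci) v)) <=
  exp (2 * PI * Rabs (Im v)) ^ Z.abs_nat k.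
Proof.
  rewrite <- Rpower_pow by apply exp_pos; unfold Rpower; rewrite ln_exp.
  apply exp_le_exp; rewrite Ci_scal_mult; simpl.
  replace (INR (Z.abs_nat k) * (2 * PI * Rabs (Im v))) with (Rabs (- (2 * PI * IZR k * Im v))).
  - apply Rle_abs.
  - rewrite INR_IZR_INZ, Nat2Z.inj_abs_nat, abs_IZR, Rabs_Ropp, !Rabs_mult, (Rabs_pos_eq 2) by lra.
    rewrite (Rabs_pos_eq PI) by (left; apply PI_RGT_0); ring.
Qed.

Definition theta_majorant (q r : R) (k : nat) : R := q ^ (k * k) * r ^ k.

Lemma theta3_term_bound v q k : 0 <= q ->
  let M := theta_majorant q (exp (2 * PI * Rabs (Im v))) (Z.abs_nat k) in
  Rabs (Re (theta3_term v q k)) <= M /\ Rabs (Im (theta3_term v q k)) <= M.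
Proof.
  intros Hq M; unfold M, theta_majorant, theta3_term.
  set (z := Cmult (Cmult (RtoC (2 * PI * IZR k)) Ci) v).
  assert (Hw : 0 <= q ^ (Z.abs_nat k * Z.abs_nat k)) by (apply pow_le, Hq).
  pose proof (exp_Re_cexp_freq_arg k v) as Hexp; fold z in Hexp.
  destruct (cexp z) as [a b] eqn:Hz.
  assert (Ha : Rabs a <= exp (Re z)) by (change a with (Re (a, b)); rewrite <- Hz; apply Rabs_Re_cexp).
  assert (Hb : Rabs b <= exp (Re z)) by (change b with (Im (a, b)); rewrite <- Hz; apply Rabs_Im_cexp).
  split; simpl; rewrite Rmult_0_l, ?Rminus_0_r, ?Rplus_0_r, Rabs_mult, (Rabs_pos_eq _ Hw);
    apply Rmult_le_compat_l; lra.
Qed.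

Lemma ex_series_theta_majorant q r : 0 < q < 1 -> 0 < r -> ex_series (theta_majorant q r).
Proof.
  intros Hq Hr.
  assert (Hpos : forall k, 0 < theta_majorant q r k)
    by (intros; apply Rmult_lt_0_compat; apply pow_lt; lra).
  apply ex_series_Rabs, (ex_series_DAlembert _ 0); [lra | intros k; specialize (Hpos k); lra |].
  apply (is_lim_seq_ext (fun k => (q ^ 2) ^ k * (q * r))).
  - intros k.
    assert (Hstep : theta_majorant q r (S k) = theta_majorant q r k * ((q ^ 2) ^ k * (q * r))).
    { unfold theta_majorant; replace (S k * S k)%nat with (k * k + (2 * k + 1))%nat by lia.
      rewrite pow_add, pow_add, <- pow_mult; simpl; ring. }
    specialize (Hpos k); rewrite Hstep.
    replace (theta_majorant q r k * ((q ^ 2) ^ k * (q * r)) / theta_majorant q r k)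
      with ((q ^ 2) ^ k * (q * r)) by (field; lra).
    symmetry; apply Rabs_pos_eq, Rmult_le_pos; [apply pow_le |]; nra.
  - replace (Finite 0) with (Finite (0 * (q * r))) by (f_equal; ring).
    apply is_lim_seq_mult'; [apply is_lim_seq_geom; rewrite Rabs_pos_eq; nra | apply is_lim_seq_const].
Qed.

Lemma is_lim_seq_increments (s d : nat -> R) :
  (forall N, s (S N) = s N + d N) -> ex_series d -> is_lim_seq s (s 0%nat + Series d).
Proof.
  intros Hs Hd.
  assert (Hsum : forall N, s (S N) = s 0%nat + sum_n d N).
  { induction N as [|N IH]; [rewrite sum_O, Hs; reflexivity|].
    rewrite sum_Sn, Hs, IH; unfold plus; simpl; ring. }
  apply is_lim_seq_incr_1, (is_lim_seq_ext (fun N => s 0%nat + sum_n d N)); [intros; symmetry; apply Hsum|].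
  apply is_lim_seq_plus'; [apply is_lim_seq_const | apply Series_correct, Hd].
Qed.

Lemma ex_finite_lim_theta3_partial (f : C -> R) v q : 0 < q < 1 ->
  (forall a b, f (Cplus a b) = f a + f b) ->
  (forall k, Rabs (f (theta3_term v q k)) <=
             theta_majorant q (exp (2 * PI * Rabs (Im v))) (Z.abs_nat k)) ->
  ex_finite_lim_seq (fun N => f (theta3_partial v q N)).
Proof.
  intros Hq Hadd Hbound.
  set (r := exp (2 * PI * Rabs (Im v))) in Hbound.
  set (d := fun N => f (theta3_term v q (- Z.of_nat (S N))) + f (theta3_term v q (Z.of_nat (S N)))).
  exists (f (theta3_partial v q 0) + Series d); apply is_lim_seq_increments.
  - intros N; rewrite theta3_partial_S, !Hadd; reflexivity.
  - apply (@ex_series_le R_AbsRing R_CompleteNormedModule d (fun N => 2 * theta_majorant q r (S N))).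
    + intros N; eapply Rle_trans; [apply Rabs_triang|].
      pose proof (Hbound (- Z.of_nat (S N))%Z); pose proof (Hbound (Z.of_nat (S N))).
      replace (Z.abs_nat (- Z.of_nat (S N))) with (S N) in * by lia.
      replace (Z.abs_nat (Z.of_nat (S N))) with (S N) in * by lia.
      lra.
    + apply (@ex_series_scal_l R_AbsRing R_NormedModule 2 (fun N => theta_majorant q r (S N))).
      apply (ex_series_incr_1 (theta_majorant q r)), ex_series_theta_majorant; [exact Hq | apply exp_pos].
Qed.

Lemma theta3_partial_lim v q : 0 < q < 1 ->
  is_lim_seqC (fun N => theta3_partial v q N) (theta3 v q).
Proof.
  intros Hq; split; apply Lim_seq_correct', ex_finite_lim_theta3_partial; try exact Hq;
    try reflexivity; intros k; apply (theta3_term_bound v q k); lra.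
Qed.

Theorem mainTheorem1 (m n : nat) (q : nat -> R) (v : nat -> nat -> C)
  (hq : forall l : nat, (l < m)%nat -> 0 < q l < 1) :
  psd n (fun j k =>
    cprod m (fun l => theta3 (Cminus (v j l) (Cconj (v k l))) (q l))).
Proof.
  apply (psd_lim n (fun N j k =>
           cprod m (fun l => theta3_partial (Cminus (v j l) (Cconj (v k l))) (q l) N))).
  - intros N; apply psd_theta3_partial_prod; intros l Hl; specialize (hq l Hl); lra.
  - intros j k; apply is_lim_seqC_cprod; intros l Hl; apply theta3_partial_lim, hq, Hl.
Qed.
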